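(* If $D$ is a quaternary near-extremal Hermitian self-dual code of length $30$ and $\alpha$ denotes the number of codewords of weight $10$ in $D$, then $\alpha=9\beta$ for some integer $\beta$ with $1\le\beta\le 1319$.
   Context: Let $\mathbb{F}_4=\{0,1,\omega,\omega^2\}$ with $\omega^2=\omega+1$. A quaternary code of length $n$ is a linear subspace of $\mathbb{F}_4^n$; it is Hermitian self-dual if it equals its dual with respect to $\langle x,y\rangle_H=\sum_k x_k y_k^2$. The weight of a vector is the number of nonzero coordinates. A quaternary Hermitian self-dual code of length $30$ is near-extremal if its minimum nonzero weight is $10$. *)

From HB Require Import structures.
From mathcomp Require Import all_boot all_order all_algebra.
Set Implicit Arguments. Unset Strict Implicit. Unset Printing Implicit Defensive.
Import GRing.Theory.
Local Open Scope ring_scope.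

(* Quaternary codes: F is a finite field with exactly 4 elements (unique up to
   isomorphism, i.e. F_4); its nontrivial automorphism is y |-> y^2. *)

Definition herm (F : fieldType) (n : nat) (x y : 'rV[F]_n) : F :=
  \sum_(k < n) x 0 k * (y 0 k) ^+ 2.

Definition wt (F : fieldType) (n : nat) (x : 'rV[F]_n) : nat :=
  #|[set k : 'I_n | x 0 k != 0]|.

Definition herm_self_dual (F : fieldType) (n : nat) (C : {vspace 'rV[F]_n}) :=
  forall y : 'rV[F]_n, (y \in C) <-> (forall x : 'rV[F]_n, x \in C -> herm x y = 0).

Definition min_weight (F : fieldType) (n : nat) (C : {vspace 'rV[F]_n}) (d : nat) :=
  (exists2 x : 'rV[F]_n, x \in C & (x != 0) /\ wt x = d) /\
  (forall x : 'rV[F]_n, x \in C -> x != 0 -> (d <= wt x)%N).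

Definition num_weight (F : finFieldType) (n : nat) (C : {vspace 'rV[F]_n}) (w : nat) : nat :=
  #|[set x : 'rV[F]_n | (x \in C) && (wt x == w)]|.

(* Fix a coordinate k. For a set S of coordinates, counting the pairs
   (x, y) in D x F^S with <x, y>_H = 0 once by x and once by y, and using
   D = D^perp, gives
     4^|S| * #{x in D | x vanishes on S} = |D| * #{y in D | supp y <= S}.
   Summing over the (t+1)-sets S containing k gives, for t <= 9, a linear
   relation between the weight distribution (b_i) of the code shortened at k
   and the number e of weight-10 words that do not vanish at k: on the right
   only 0 and, when t = 9, the weight-10 words contribute.  Hermitian
   self-dual codes have even weights, so only b_0 = 1 and b_10, b_12, ...,
   b_28 can be nonzero, and the ten relations force b_10 = 2e and
   b_12 + 9 b_10 = 71253.  Scaling shows e = 3 beta, where beta counts the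
   weight-10 words with x_k = 1; hence A_10 = b_10 + e = 9 beta, and b_12 >= 0
   gives 54 beta <= 71253. *)

From Stdlib Require Import ZArith Lia.
From HB Require Import structures.
From mathcomp Require Import all_boot all_order all_algebra all_field zify.

Set Implicit Arguments. Unset Strict Implicit. Unset Printing Implicit Defensive.
Import GRing.Theory.

Section SetCounting.
Variable T : finType.

Lemma card_set_sum (A : {pred T}) (P : pred T) :
  #|[set x in A | P x]| = \sum_(x in A) P x.
Proof.
rewrite -sum1_card [RHS]big_mkcond [LHS]big_mkcond; apply: eq_bigr => x _.
by rewrite !inE; case: (x \in A); case: (P x).
Qed.

Lemma sum_nat_if_mem (A B : {pred T}) (c1 c2 : nat) : B \subset A ->
  \sum_(x in A) (if x \in B then c1 else c2) = #|B| * c1 + (#|A| - #|B|) * c2.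
Proof.
move=> sBA; have BA x : x \in B -> x \in A by apply: (subsetP sBA).
have cardB : #|[predI A & B]| = #|B|.
  by apply: eq_card => x; rewrite !inE andb_idl // => /BA.
rewrite -(cardID B A) cardB addKn (bigID (mem B)) /= -!sum_nat_const.
congr addn.
  by apply: eq_big => [x | x /andP[_ ->] //]; rewrite andb_idl // => /BA.
by apply: eq_big => [x | x /andP[_ /negPf ->] //]; rewrite !inE andbC.
Qed.

Lemma sum_nat_by_level (P : pred T) (g : T -> nat) (f : nat -> nat) N :
  (forall x, g x <= N) ->
  \sum_(x | P x) f (g x) = \sum_(0 <= i < N.+1) #|[set x | P x && (g x == i)]| * f i.
Proof.
move=> leN; rewrite big_mkord (partition_big (fun x => inord (g x) : 'I_N.+1) predT) //=.
apply: eq_bigr => i _; rewrite -sum1dep_card big_distrl /=.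
apply: eq_big => [x | x /andP[_ /eqP <-]]; last by rewrite mul1n inordK ?ltnS.
by rewrite -val_eqE /= inordK ?ltnS.
Qed.

Definition subsets_through (k : T) (m : nat) :=
  [set S : {set T} | (k \in S) && (#|S| == m)].

Lemma card_subsets_through_sub (k : T) (Z : {set T}) t : k \in Z ->
  #|[set S in subsets_through k t.+1 | S \subset Z]| = 'C(#|Z|.-1, t).
Proof.
move=> kZ; have cZ : #|Z :\ k| = #|Z|.-1 by rewrite (cardsD1 k Z) kZ.
have kNsub (A : {set T}) : A \subset Z :\ k -> k \notin A.
  by move=> sA; apply/negP => /(subsetP sA); rewrite setD11.
rewrite -cZ -cards_draws -[RHS](card_in_imset (f := fun A => k |: A)); last first.
  move=> A1 A2; rewrite !inE => /andP[sA1 _] /andP[sA2 _] eqA.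
  by rewrite -(setU1K (kNsub _ sA1)) -(setU1K (kNsub _ sA2)) eqA.
apply: eq_card => S; rewrite !inE; apply/idP/imsetP.
- case/andP => /andP[kS /eqP cS] sZ; exists (S :\ k); last by rewrite setD1K.
  rewrite inE (setSD _ sZ) /=.
  by move: cS; rewrite (cardsD1 k S) kS add1n => -[->].
- case=> A; rewrite inE => /andP[sA /eqP cA] ->.
  rewrite setU11 cardsU1 (kNsub _ sA) cA eqxx subUset sub1set kZ /=.
  exact: subset_trans sA (subD1set _ _).
Qed.

Lemma card_subsets_through_sup (k : T) (Z : {set T}) t : t < #|Z| ->
  #|[set S in subsets_through k t.+1 | Z \subset S]| = (k \in Z) && (#|Z| == t.+1).
Proof.
move=> ltZ; set A := [set S in _ | _].
have A_Z S : S \in A -> S = Z.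
  rewrite !inE => /andP[/andP[_ /eqP cS] ZS].
  by apply/esym/eqP; rewrite eqEcard ZS cS.
case hZ: ((k \in Z) && (#|Z| == t.+1)) => /=.
  rewrite -(cards1 Z); apply: eq_card => S; rewrite inE.
  apply/idP/eqP => [/A_Z // | ->]; by rewrite !inE subxx andbT.
apply/eqP; rewrite cards_eq0 -subset0; apply/subsetP => S /[dup] /A_Z ->.
by rewrite !inE => /andP[/andP[kZ cZ] _]; rewrite kZ cZ in hZ.
Qed.

End SetCounting.

Local Open Scope ring_scope.

Lemma card_additive_onto (V W : finZmodType) (A : {set V}) (f : V -> W) :
  {in A &, forall u v, u + v \in A} -> {in A, forall u, - u \in A} ->
  {morph f : u v / u + v} -> (forall w, exists2 u, u \in A & f u = w) ->
  #|A| = #|W| * #|[set u in A | f u == 0]|.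
Proof.
move=> addA oppA f_add f_onto.
have f_sub u v : f (u - v) = f u - f v.
  by apply: (addIr (f v)); rewrite -f_add !subrK.
have fiber w : #|[set u in A | f u == w]| = #|[set u in A | f u == 0]|.
  have [z zA fz] := f_onto w.
  rewrite -(card_imset [set u in A | f u == 0] (addIr z)).
  apply: eq_card => u; rewrite inE; apply/andP/imsetP => [[uA /eqP fu] | [v]].
    exists (u - z); last by rewrite subrK.
    by rewrite inE addA ?oppA // f_sub fu fz subrr eqxx.
  by rewrite inE => /andP[vA /eqP fv] ->; rewrite addA // f_add fv fz add0r.
rewrite -sum1_card (partition_big f predT) //=.
rewrite (eq_bigr (fun _ => #|[set u in A | f u == 0]|)) ?sum_nat_const // => w _.
by rewrite -(fiber w) -sum1_card; apply: eq_bigl => u; rewrite inE.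
Qed.

Section Rows.
Variables (F : finFieldType) (n : nat).
Implicit Types (x y : 'rV[F]_n) (S : {set 'I_n}).

Definition supp x := [set k | x 0 k != 0].

Definition rows_on S := [set y : 'rV[F]_n | supp y \subset S].

Definition subcode (D : {vspace 'rV[F]_n}) S := [set x in D | supp x \subset S].

Lemma supp_eq0 x : (supp x == set0) = (x == 0).
Proof.
apply/eqP/eqP => [x0 | ->]; last by apply/setP => k; rewrite !inE mxE eqxx.
by apply/rowP => k; move/setP: x0 => /(_ k); rewrite !inE mxE => /negbFE/eqP.
Qed.

Lemma supp0 : supp (0 : 'rV[F]_n) = set0.
Proof. by apply/eqP; rewrite supp_eq0. Qed.

Lemma wt_eq0 x : (wt x == 0%N) = (x == 0).
Proof. by rewrite cards_eq0 supp_eq0. Qed.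

Lemma wt_le x : (wt x <= n)%N.
Proof. by have := max_card (supp x); rewrite card_ord. Qed.

Lemma wtZ a x : a != 0 -> wt (a *: x) = wt x.
Proof. by move=> a0; apply: eq_card => k; rewrite !inE mxE mulf_eq0 negb_or a0. Qed.

Lemma wt_lt_zero_at x k : x 0 k = 0 -> (wt x < n)%N.
Proof.
move=> xk; have : supp x \proper [set: 'I_n].
  by rewrite properT; apply/eqP => /setP /(_ k); rewrite !inE xk eqxx.
by move/proper_card; rewrite cardsT card_ord.
Qed.

Lemma card_compl_supp x : #|~: supp x| = (n - wt x)%N.
Proof. by have := cardsC (supp x); rewrite card_ord /wt -/(supp x); lia. Qed.

Lemma rows_on_eq0 S y k : y \in rows_on S -> k \notin S -> y 0 k = 0.
Proof.
by rewrite inE => /subsetP yS kS; apply/eqP; apply: contraR kS => yk; apply: yS; rewrite inE.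
Qed.

Lemma rows_onD S y y' : y \in rows_on S -> y' \in rows_on S -> y + y' \in rows_on S.
Proof.
move=> yS y'S; rewrite inE; apply/subsetP => k; rewrite inE mxE.
by apply: contraR => kS; rewrite !(rows_on_eq0 _ kS) ?addr0.
Qed.

Lemma rows_onZ S a y : y \in rows_on S -> a *: y \in rows_on S.
Proof.
move=> yS; rewrite inE; apply/subsetP => k; rewrite inE mxE.
by apply: contraR => kS; rewrite (rows_on_eq0 yS kS) mulr0.
Qed.

Lemma delta_rows_on S k : k \in S -> delta_mx 0 k \in rows_on S.
Proof.
move=> kS; rewrite inE; apply/subsetP => j; rewrite inE mxE eqxx /=.
by case: (eqVneq j k) => [-> // | _]; rewrite eqxx.
Qed.

Lemma card_rows_on S : #|rows_on S| = (#|F| ^ #|S|)%N.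
Proof.
have -> : rows_on S = (fun g : {ffun 'I_n -> F} => \row_k g k) @: pffun_on 0 S predT.
  apply/setP => y; rewrite inE; apply/idP/imsetP => [/subsetP yS | [g]].
    exists [ffun k => y 0 k]; last by apply/rowP => k; rewrite !mxE ffunE.
    apply/pffun_onP; split=> //; apply/subsetP => k.
    by rewrite inE ffunE => yk; apply: yS; rewrite inE.
  case/pffun_onP => /subsetP gS _ ->; apply/subsetP => k.
  by rewrite inE mxE => gk; apply: gS; rewrite inE.
rewrite card_imset ?card_pffun_on // => g1 g2 /rowP g12.
by apply/ffunP => k; have := g12 k; rewrite !mxE.
Qed.

End Rows.

Section WeightCounts.
Variables (F : finFieldType) (n : nat) (D : {vspace 'rV[F]_n}).

Definition num_weight_zero_at (k : 'I_n) (w : nat) :=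
  #|[set x in D | (x 0 k == 0) && (wt x == w)]|.

Definition num_weight_nonzero_at (k : 'I_n) (w : nat) :=
  #|[set x in D | (x 0 k != 0) && (wt x == w)]|.

Lemma num_weight_split k w :
  num_weight D w = (num_weight_zero_at k w + num_weight_nonzero_at k w)%N.
Proof.
rewrite /num_weight -(cardsID [set x : 'rV[F]_n | x 0 k == 0]).
by congr addn; apply: eq_card => x; rewrite !inE;
  case: (x \in D); case: (wt x == w); case: (x 0 k == 0).
Qed.

Lemma num_weight_zero_at0 k : num_weight_zero_at k 0 = 1%N.
Proof.
rewrite -(cards1 (0 : 'rV[F]_n)); apply: eq_card => x; rewrite !inE wt_eq0.
by case: (eqVneq x 0) => [->|]; rewrite ?andbF // mem0v mxE eqxx.
Qed.

Lemma num_weight_nonzero_at_scale k w :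
  num_weight_nonzero_at k w =
  (#|F|.-1 * #|[set x in D | (x 0%R k == 1%R) && (wt x == w)]|)%N.
Proof.
rewrite /num_weight_nonzero_at -sum1_card.
rewrite (partition_big (fun x : 'rV[F]_n => x 0 k) (fun a => a != 0)) => [|x]; last first.
  by rewrite inE => /andP[_ /andP[]].
rewrite -(cardC1 (0 : F)) -sum_nat_const /=; apply: eq_big => [a | a a0]; first by rewrite !inE.
rewrite sum1dep_card -[RHS](card_imset _ (scalerI a0)); apply: eq_card => y.
rewrite !inE; apply/idP/imsetP => [/andP[/and3P[yD ya0 wy] /eqP ya] | [z]].
  exists (a^-1 *: y); last by rewrite scalerA divff // scale1r.
  by rewrite !inE memvZ // wtZ ?invr_eq0 // wy mxE ya mulVf ?eqxx.
rewrite !inE => /and3P[zD /eqP z1 wz] ->.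
by rewrite memvZ // wtZ // wz mxE z1 mulr1 a0 eqxx.
Qed.

Lemma sum_card_subcode_compl k t :
  \sum_(S in subsets_through k t.+1) #|subcode D (~: S)| =
  \sum_(x in D | x 0 k == 0) 'C((n - wt x).-1, t).
Proof.
under eq_bigr do rewrite card_set_sum.
rewrite exchange_big /= [RHS]big_mkcondr; apply: eq_bigr => x xD.
under eq_bigr do rewrite subsetC.
rewrite -card_set_sum; case: eqP => xk.
  by rewrite card_subsets_through_sub ?card_compl_supp // !inE negbK xk eqxx.
apply/eqP; rewrite cards_eq0 -subset0; apply/subsetP => S.
rewrite !inE => /andP[/andP[kS _] /subsetP /(_ k kS)].
by rewrite !inE negbK => /eqP.
Qed.

Lemma sum_card_subcode k t d :
  (forall x, x \in D -> x != 0 -> (d <= wt x)%N) -> (t < d)%N ->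
  \sum_(S in subsets_through k t.+1) #|subcode D S| =
  ('C(n.-1, t) + (t.+1 == d) * num_weight_nonzero_at k d)%N.
Proof.
move=> min_wt ltd; under eq_bigr do rewrite card_set_sum.
rewrite exchange_big /= (bigD1 0) ?mem0v //=; congr addn.
  have := card_subsets_through_sub t (in_setT k); rewrite cardsT card_ord => <-.
  by rewrite -card_set_sum; apply: eq_card => S; rewrite !inE supp0 sub0set subsetT.
rewrite (eq_bigr (fun y => (k \in supp y) && (wt y == t.+1) : nat)) => [|y /andP[yD y0]].
  have [<- | dt] := eqVneq t.+1 d.
    rewrite mul1n /num_weight_nonzero_at card_set_sum [RHS](bigD1 0) ?mem0v //=.
    by rewrite mxE eqxx; apply: eq_bigr => y _; rewrite inE.
  rewrite mul0n big1 // => y /andP[yD y0].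
  by case: eqP => [wy | _]; rewrite ?andbF //; have := min_wt y yD y0; lia.
rewrite -card_set_sum card_subsets_through_sup //.
exact: leq_trans ltd (min_wt y yD y0).
Qed.

End WeightCounts.

Section QuaternaryField.
Variable F : finFieldType.
Hypothesis F4 : #|F| = 4%N.

Lemma char2_F4 : (2 \in [pchar F])%N.
Proof. by apply: (@card_finPcharP _ 2 2) => //; rewrite F4. Qed.

Lemma expr4_F4 (a : F) : a ^+ 4 = a.
Proof. by rewrite -[in X in _ ^+ X]F4 expf_card. Qed.

Lemma sqrK_F4 (a : F) : (a ^+ 2) ^+ 2 = a.
Proof. by rewrite -exprM expr4_F4. Qed.

Lemma expr3_F4 (a : F) : a != 0 -> a ^+ 3 = 1.
Proof. by move=> a0; apply: (mulIf a0); rewrite mul1r -exprSr expr4_F4. Qed.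

Lemma sqrD_F4 (a b : F) : (a + b) ^+ 2 = a ^+ 2 + b ^+ 2.
Proof. by rewrite sqrrD mulrn_pchar ?char2_F4 // addr0. Qed.

Lemma natr_eq0_F4 (m : nat) : ((m%:R : F) == 0) = ~~ odd m.
Proof. by rewrite -(dvdn_pcharf char2_F4) dvdn2. Qed.

Variable n : nat.
Implicit Types (x y : 'rV[F]_n) (S : {set 'I_n}).

Lemma herm_addl x x' y : herm (x + x') y = herm x y + herm x' y.
Proof. by rewrite /herm -big_split; apply: eq_bigr => k _; rewrite mxE mulrDl. Qed.

Lemma herm_scalel a x y : herm (a *: x) y = a * herm x y.
Proof. by rewrite /herm mulr_sumr; apply: eq_bigr => k _; rewrite mxE -mulrA. Qed.

Lemma herm_addr x y y' : herm x (y + y') = herm x y + herm x y'.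
Proof. by rewrite /herm -big_split; apply: eq_bigr => k _; rewrite mxE sqrD_F4 mulrDr. Qed.

Lemma herm_scaler a x y : herm x (a *: y) = a ^+ 2 * herm x y.
Proof. by rewrite /herm mulr_sumr; apply: eq_bigr => k _; rewrite mxE exprMn mulrCA. Qed.

Lemma herm_delta x k : herm x (delta_mx 0 k) = x 0 k.
Proof.
rewrite /herm (bigD1 k) //= big1 ?addr0 => [|j /negPf jk].
  by rewrite mxE !eqxx expr1n mulr1.
by rewrite mxE jk andbF expr0n mulr0.
Qed.

Lemma herm_self x : herm x x = (wt x)%:R.
Proof.
rewrite /herm /wt -sum1_card natr_sum [RHS]big_mkcond /=.
apply: eq_bigr => k _; rewrite inE -exprS.
by case: eqP => [->|/eqP xk]; rewrite ?expr0n ?expr3_F4.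
Qed.

Lemma card_herm_kernel_rows x S :
  (#|F| * #|[set y in rows_on F S | herm x y == 0%R]| =
   if supp x \subset ~: S then #|F| * #|rows_on F S| else #|rows_on F S|)%N.
Proof.
case: ifP => [/subsetP xS | /negbT/subsetPn [k xk kS]].
  congr muln; apply: eq_card => y; rewrite !inE andb_idr // => yS.
  apply/eqP; rewrite /herm big1 // => k _.
  have [-> | xk] := eqVneq (x 0 k) 0; first by rewrite mul0r.
  have := xS k; rewrite !inE xk => /(_ isT) kS.
  by rewrite (rows_on_eq0 (y := y) (S := S)) ?inE // expr0n mulr0.
rewrite inE negbK in kS; rewrite inE in xk.
symmetry; apply: card_additive_onto => [y y' | y | y y' | a].
- exact: rows_onD.
- by rewrite -scaleN1r; apply: rows_onZ.
- exact: herm_addr.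
- exists ((a / x 0 k) ^+ 2 *: delta_mx 0 k); first exact/rows_onZ/delta_rows_on.
  by rewrite herm_scaler sqrK_F4 herm_delta divfK.
Qed.

Section SelfDual.
Variable D : {vspace 'rV[F]_n}.
Hypothesis Hsd : herm_self_dual D.

Lemma wt_even x : x \in D -> ~~ odd (wt x).
Proof. by move=> xD; rewrite -natr_eq0_F4 -herm_self; apply/eqP/(Hsd x).1. Qed.

Lemma card_herm_kernel_code y :
  (#|F| * #|[set x in D | herm x y == 0%R]| =
   if y \in D then #|F| * #|D| else #|D|)%N.
Proof.
case: ifP => [yD | yND].
  by congr muln; apply: eq_card => x; rewrite inE andb_idr // => /(Hsd y).1 ->.
have [x0 x0D x0y] : exists2 x0, x0 \in D & herm x0 y != 0.
  apply/exists_inP; apply: contraFT yND => /exists_inPn x0y.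
  by apply/(Hsd y).2 => x xD; apply/eqP; have := x0y x xD; rewrite negbK.
have := @card_additive_onto _ _ [set x in D] (fun x => herm x y).
rewrite cardsE => -> => [|x x' | x | x x' | a]; rewrite ?inE.
- by congr muln; apply: eq_card => x; rewrite !inE.
- exact: memvD.
- by rewrite memvN.
- exact: herm_addl.
- by exists ((a / herm x0 y) *: x0); rewrite ?inE ?memvZ // herm_scalel divfK.
Qed.

Lemma card_subcode_duality S :
  (4 ^ #|S| * #|subcode D (~: S)| = #|D| * #|subcode D S|)%N.
Proof.
pose N := (\sum_(x in D) \sum_(y in rows_on F S) (herm x y == 0%R))%N.
have subX : subcode D (~: S) \subset D by apply/subsetP => x; rewrite inE => /andP[].
have subY : subcode D S \subset rows_on F S.
  by apply/subsetP => y; rewrite !inE => /andP[].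
have N_rows : (4 * N = #|subcode D (~: S)| * (4 * #|rows_on F S|) +
                     (#|D| - #|subcode D (~: S)|) * #|rows_on F S|)%N.
  rewrite /N big_distrr -sum_nat_if_mem //=; apply: eq_bigr => x xD.
  by rewrite -card_set_sum -F4 card_herm_kernel_rows inE xD.
have N_code : (4 * N = #|subcode D S| * (4 * #|D|) +
                     (#|rows_on F S| - #|subcode D S|) * #|D|)%N.
  rewrite /N exchange_big big_distrr -sum_nat_if_mem //=; apply: eq_bigr => y yS.
  rewrite inE in yS; by rewrite -card_set_sum -F4 card_herm_kernel_code inE yS andbT.
move: N_rows N_code (subset_leq_card subX) (subset_leq_card subY).
rewrite card_rows_on F4; move: (4 ^ #|S|)%N => W; nia.
Qed.

Lemma card_self_dual : (#|D| ^ 2 = 4 ^ n)%N.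
Proof.
have := card_subcode_duality [set: 'I_n]; rewrite cardsT card_ord setCT.
have -> : subcode D set0 = [set 0].
  by apply/setP => x; rewrite !inE subset0 supp_eq0 andb_idl // => /eqP ->; apply: mem0v.
have -> : subcode D [set: 'I_n] = [set x in D].
  by apply/setP => x; rewrite !inE subsetT andbT.
by rewrite cards1 cardsE muln1.
Qed.

Lemma moment_identity k t d :
  (forall x, x \in D -> x != 0 -> (d <= wt x)%N) -> (t < d)%N ->
  (4 ^ t.+1 * \sum_(0 <= i < n.+1) num_weight_zero_at D k i * 'C((n - i).-1, t) =
   #|D| * ('C(n.-1, t) + (t.+1 == d) * num_weight_nonzero_at D k d))%N.
Proof.
move=> min_wt ltd; rewrite -(sum_card_subcode k min_wt ltd).
have -> : (\sum_(0 <= i < n.+1) num_weight_zero_at D k i * 'C((n - i).-1, t) =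
           \sum_(x in D | x 0%R k == 0%R) 'C((n - wt x).-1, t))%N.
  rewrite (sum_nat_by_level _ (fun i => 'C((n - i).-1, t)) (@wt_le _ _)).
  by apply: eq_bigr => i _; congr muln; apply: eq_card => x; rewrite !inE andbA.
rewrite -sum_card_subcode_compl !big_distrr; apply: eq_bigr => S.
by rewrite inE => /andP[_ /eqP <-]; apply: card_subcode_duality.
Qed.

Lemma num_weight_zero_at_eq0 k d i :
  (forall x, x \in D -> x != 0 -> (d <= wt x)%N) ->
  i != 0%N -> ~~ [&& d <= i, i < n & ~~ odd i]%N -> num_weight_zero_at D k i = 0%N.
Proof.
move=> min_wt i0 hi; apply/eqP; rewrite cards_eq0 -subset0; apply/subsetP => x.
rewrite !inE => /and3P[xD /eqP xk /eqP wi]; move: i0 hi; rewrite -wi wt_eq0 => x0.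
by rewrite min_wt // (wt_lt_zero_at xk) wt_even.
Qed.

End SelfDual.

End QuaternaryField.

Section ShortenedWeightSystem.
Local Open Scope Z_scope.

Fixpoint binz (m k : nat) : Z :=
  if k is k'.+1 then binz m k' * Z.of_nat (m - k') / Z.of_nat k else 1.

Lemma binzE m k : binz m k = Z.of_nat 'C(m, k).
Proof.
elim: k => [|k IHk] /=; first by rewrite bin0.
have := congr1 Z.of_nat (mul_bin_left m k); rewrite !Nat2Z.inj_mul -IHk => binS.
by rewrite Z.mul_comm -binS Z.mul_comm Z.div_mul //; lia.
Qed.

Definition shortened_support : seq nat := [:: 0; 10; 12; 14; 16; 18; 20; 22; 24; 26; 28]%N.

Lemma shortened_weight_system (b : nat -> Z) (e : Z) :
  b 0%N = 1 ->
  (forall t, (t <= 9)%N -> 4 ^ Z.of_nat t.+1 *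
     \big[Z.add/0]_(i <- shortened_support) (b i * binz (30 - i).-1 t)
     = 4 ^ 15 * (binz 29 t + Z.of_nat (t.+1 == 10)%N * e)) ->
  b 10%N = 2 * e /\ b 12%N + 9 * b 10%N = 71253.
Proof.
move=> b0 moment.
move: (moment 0%N isT) (moment 1%N isT) (moment 2%N isT) (moment 3%N isT) (moment 4%N isT)
  (moment 5%N isT) (moment 6%N isT) (moment 7%N isT) (moment 8%N isT) (moment 9%N isT).
rewrite /shortened_support !big_cons !big_nil b0.
repeat match goal with
  | |- context [binz ?a ?b] => let v := eval vm_compute in (binz a b) in change (binz a b) with v
  | |- context [Z.pow ?a ?b] => let v := eval vm_compute in (Z.pow a b) in change (Z.pow a b) with v
  | |- context [Z.of_nat ?a] => let v := eval vm_compute in (Z.of_nat a) in change (Z.of_nat a) with v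
  end.
lia.
Qed.

End ShortenedWeightSystem.

Section Length30.
Local Open Scope Z_scope.
Variables (F : finFieldType) (D : {vspace 'rV[F]_30}).
Hypotheses (F4 : #|F| = 4%N) (Hsd : herm_self_dual D).
Hypothesis min_wt : forall x, x \in D -> x != 0%R -> (10 <= wt x)%N.

Lemma card_self_dual30 : #|D| = (4 ^ 15)%N.
Proof.
apply/eqP; rewrite -(eqn_exp2r _ _ (isT : 0 < 2)%N) (card_self_dual F4 Hsd) -expnM.
exact: eqxx.
Qed.

Lemma shortened_moments t : (t <= 9)%N ->
  4 ^ Z.of_nat t.+1 * \big[Z.add/0]_(i <- shortened_support)
      (Z.of_nat (num_weight_zero_at D ord0 i) * binz (30 - i).-1 t)
  = 4 ^ 15 * (binz 29 t + Z.of_nat (t.+1 == 10)%N * Z.of_nat (num_weight_nonzero_at D ord0 10)).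
Proof.
move=> t9; pose f i := (num_weight_zero_at D ord0 i * 'C((30 - i).-1, t))%N.
have support_sum : (\sum_(0 <= i < 31) f i = \sum_(i <- shortened_support) f i)%N.
  rewrite -(@big_rmcond_in _ _ _ _ _ (fun i => i \in shortened_support)) => [|i].
    by rewrite -big_filter.
  rewrite mem_iota => /andP[_ lt31] notin; rewrite /f.
  by rewrite (num_weight_zero_at_eq0 F4 Hsd ord0 min_wt) //; move: notin; rewrite !inE; lia.
have sumE : Z.of_nat (\sum_(i <- shortened_support) f i) =
    \big[Z.add/0]_(i <- shortened_support)
       (Z.of_nat (num_weight_zero_at D ord0 i) * binz (30 - i).-1 t).
  rewrite (big_morph Z.of_nat (id1 := 0) (op1 := Z.add) Nat2Z.inj_add (erefl : Z.of_nat 0 = 0)).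
  by apply: eq_bigr => i _; rewrite Nat2Z.inj_mul binzE.
have := moment_identity F4 Hsd ord0 min_wt (t9 : t < 10)%N.
rewrite card_self_dual30 -/f support_sum -sumE binzE [30.-1]/=; lia.
Qed.

End Length30.

Theorem fact5p4 (F : finFieldType) (HF : #|F| = 4%N) (D : {vspace 'rV[F]_30})
  (Hsd : herm_self_dual D) (Hmin : min_weight D 10) :
  exists beta : nat, num_weight D 10 = (9 * beta)%N /\ (1 <= beta <= 1319)%N.
Proof.
have [[x0 x0D [_ wt_x0]] min_wt] := Hmin.
have [b10E b12E] := shortened_weight_system
  (congr1 Z.of_nat (num_weight_zero_at0 D ord0)) (shortened_moments HF Hsd min_wt).
exists #|[set x in D | (x 0%R ord0 == 1%R) && (wt x == 10%N)]|.
have num_pos : (0 < num_weight D 10)%N.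
  by apply/card_gt0P; exists x0; rewrite inE x0D wt_x0 eqxx.
move: (num_weight_split D ord0 10) (num_weight_nonzero_at_scale D ord0 10) num_pos.
rewrite HF; lia.
Qed.
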